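(* Let $n\ge 2$, let $A\in\mathbb{R}^{n\times n}$ be symmetric positive definite, $B=A^{1/2}$, $E=\{x: x^{\top}A^{-1}x=1\}$, and for $x_0$ with $x_0^{\top}A^{-1}x_0=1$ set $y_0=B^{-1}x_0$. There exists a parallelepiped $P$ inscribed in $E$ having $x_0$ as a vertex with $L(P)=2^n\sqrt{\operatorname{tr}(A)}$ in each of the following cases: (a) $n=2$ and $x_0$ arbitrary on $E$; (b) $n\ge2$, $A$ is a scalar multiple of the identity, and $x_0$ arbitrary on $E$; (c) $n\ge 3$ and $y_0$ is an eigenvector of $A$.
   Context: A (centred, $n$-dimensional) parallelepiped with linearly independent edge vectors $v_1,\dots,v_n$ is $P=\{\sum_i t_iv_i:|t_i|\le\tfrac12\}$ with vertices $\tfrac12\sum_i\varepsilon_iv_i$, $\varepsilon\in\{\pm1\}^n$; it is inscribed in $E$ if all vertices satisfy $x^{\top}A^{-1}x=1$. $L(P)=2^{n-1}\sum_i\|v_i\|$ is the total edge length. *)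

From HB Require Import structures.
From mathcomp Require Import all_boot all_order all_algebra.
From mathcomp Require Import reals.
Set Implicit Arguments. Unset Strict Implicit. Unset Printing Implicit Defensive.
Import Order.TTheory GRing.Theory Num.Theory.
Local Open Scope ring_scope.

Definition qform (R : realType) (n : nat) (M : 'M[R]_n) (x : 'cV[R]_n) : R :=
  (x^T *m M *m x) 0 0.

Definition symmetric (R : realType) (n : nat) (M : 'M[R]_n) : Prop := M^T = M.

Definition pos_def (R : realType) (n : nat) (M : 'M[R]_n) : Prop :=
  symmetric M /\ forall x : 'cV[R]_n, x != 0 -> 0 < qform M x.

Definition enorm (R : realType) (n : nat) (v : 'cV[R]_n) : R :=
  Num.sqrt ((v^T *m v) 0 0).

Definition lin_indep (R : realType) (n : nat) (v : 'I_n -> 'cV[R]_n) : Prop :=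
  forall c : 'I_n -> R, \sum_(i < n) c i *: v i = 0 -> forall i, c i = 0.

Definition pvertex (R : realType) (n : nat) (v : 'I_n -> 'cV[R]_n)
    (e : 'I_n -> bool) : 'cV[R]_n :=
  2^-1 *: \sum_(i < n) ((-1) ^+ e i) *: v i.

Definition inscribed (R : realType) (n : nat) (A : 'M[R]_n)
    (v : 'I_n -> 'cV[R]_n) : Prop :=
  forall e : 'I_n -> bool, qform (invmx A) (pvertex v e) = 1.

Definition is_vertex (R : realType) (n : nat) (v : 'I_n -> 'cV[R]_n)
    (x : 'cV[R]_n) : Prop :=
  exists e : 'I_n -> bool, pvertex v e = x.

Definition edge_length (R : realType) (n : nat) (v : 'I_n -> 'cV[R]_n) : R :=
  2 ^+ n.-1 * \sum_(i < n) enorm (v i).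

From HB Require Import structures.
From mathcomp Require Import all_boot all_order all_algebra.
From mathcomp Require Import reals.
From mathcomp.algebra_tactics Require Import ring lra.
Import Order.TTheory GRing.Theory Num.Theory.
Local Open Scope ring_scope.

Set Implicit Arguments. Unset Strict Implicit. Unset Printing Implicit Defensive.

(* With [y := B^-1 x0], a unit vector, the quadratic form
   [q x := tr(A) (y.x)^2 - x^T A x] has trace zero.  Hence Givens rotations
   (each pairing a positive with a negative diagonal entry and cancelling one
   of them) produce an orthonormal basis [u_k] with [q u_k = 0], i.e.
   [u_k^T A u_k = tr(A) (y.u_k)^2].  Take the edges [v_k := 2 (y.u_k) B u_k]:
   the vertices are [B] applied to [sum_k +-(y.u_k) u_k], unit vectors, so they
   lie on [E]; all signs + give [x0]; and [|v_k| = 2 sqrt(tr A) (y.u_k)^2]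
   sums to [2 sqrt(tr A)] by Parseval.  Positivity of [A] makes every
   [y.u_k] nonzero, so the edges are independent.  This works for every [n]
   and every [x0] on [E], so the case distinction of the statement is not
   needed. *)

Section BilinearForm.
Variables (R : realType) (n : nat).
Implicit Types (M : 'M[R]_n) (x y z : 'cV[R]_n).

Definition bform M x y : R := (x^T *m M *m y) 0 0.

Lemma bformDl M x y z : bform M (x + y) z = bform M x z + bform M y z.
Proof. by rewrite /bform linearD !mulmxDl mxE. Qed.

Lemma bformDr M x y z : bform M x (y + z) = bform M x y + bform M x z.
Proof. by rewrite /bform !mulmxDr mxE. Qed.

Lemma bformZl M a x y : bform M (a *: x) y = a * bform M x y.
Proof. by rewrite /bform linearZ -!scalemxAl mxE. Qed.

Lemma bformZr M a x y : bform M x (a *: y) = a * bform M x y.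
Proof. by rewrite /bform -!scalemxAr mxE. Qed.

Lemma bform0l M y : bform M 0 y = 0.
Proof. by rewrite -(scale0r 0) bformZl mul0r. Qed.

Lemma bform_suml M (I : finType) (F : I -> 'cV[R]_n) y :
  bform M (\sum_i F i) y = \sum_i bform M (F i) y.
Proof. by rewrite /bform raddf_sum !mulmx_suml summxE. Qed.

Lemma bform_sumr M (I : finType) (F : I -> 'cV[R]_n) x :
  bform M x (\sum_i F i) = \sum_i bform M x (F i).
Proof. by rewrite /bform mulmx_sumr summxE. Qed.

Lemma bformC M x y : M^T = M -> bform M x y = bform M y x.
Proof.
move=> symM; rewrite /bform.
transitivity ((x^T *m M *m y)^T 0 0); first by rewrite [RHS]mxE.
by rewrite !trmx_mul trmxK symM mulmxA.
Qed.

Lemma bform_comb_diag M a b x z : M^T = M ->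
  bform M (a *: x + b *: z) (a *: x + b *: z) =
  a ^+ 2 * bform M x x + 2 * a * b * bform M x z + b ^+ 2 * bform M z z.
Proof.
by move=> symM; rewrite !(bformDl, bformDr, bformZl, bformZr) (bformC z x symM); ring.
Qed.

Lemma bform_mxB M N x y : bform (M - N) x y = bform M x y - bform N x y.
Proof. by rewrite /bform mulmxBr mulmxBl !mxE. Qed.

Lemma bform_mxZ a M x y : bform (a *: M) x y = a * bform M x y.
Proof. by rewrite /bform -scalemxAr -scalemxAl mxE. Qed.

Lemma bform_delta M k l : bform M (col k 1%:M) (col l 1%:M) = M k l.
Proof. by rewrite /bform tr_col trmx1 -row_mul mul1mx [col l _]colE mul1mx -colE !mxE. Qed.

End BilinearForm.

Notation dot := (bform 1%:M).

Section Orthonormal.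
Variables (R : realType) (n : nat).
Implicit Types (u : 'I_n -> 'cV[R]_n) (x y z : 'cV[R]_n).

Definition orthonormal u := forall k l, dot (u k) (u l) = (k == l)%:R.

Lemma dot_sum_orthonormal u (a : 'I_n -> R) l : orthonormal u ->
  dot (\sum_k a k *: u k) (u l) = a l.
Proof.
move=> uON; rewrite bform_suml (bigD1 l) //= big1 ?addr0; last first.
  by move=> k kl; rewrite bformZl uON (negbTE kl) mulr0.
by rewrite bformZl uON eqxx mulr1.
Qed.

Lemma dot_sums_orthonormal u (a b : 'I_n -> R) : orthonormal u ->
  dot (\sum_k a k *: u k) (\sum_k b k *: u k) = \sum_k a k * b k.
Proof.
move=> uON; rewrite bform_sumr; apply: eq_bigr => k _.
by rewrite bformZr dot_sum_orthonormal // mulrC.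
Qed.

Lemma dotC y z : dot y z = dot z y.
Proof. by apply: bformC; rewrite trmx1. Qed.

Lemma dotE y z : dot y z = \sum_r y r 0 * z r 0.
Proof. by rewrite /bform mulmx1 mxE; apply: eq_bigr => r _; rewrite mxE. Qed.

Lemma bform_rank1 x y z : bform (y *m y^T) x z = dot y x * dot y z.
Proof.
by rewrite dotC /bform !mulmx1 !mulmxA -(mulmxA _ y^T) mxE big_ord1.
Qed.

Lemma mxtrace_rank1 y : \tr (y *m y^T) = dot y y.
Proof. by rewrite mxtrace_mulC trace_mx11 /bform mulmx1. Qed.

Lemma orthonormal_expansion u y : orthonormal u -> y = \sum_k dot y (u k) *: u k.
Proof.
move=> uON; pose U := \matrix_(r, k) u k r 0.
have UtU : U^T *m U = 1%:M.
  apply/matrixP => k l; rewrite !mxE -uON dotE.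
  by apply: eq_bigr => r _; rewrite !mxE.
transitivity (U *m (U^T *m y)); first by rewrite mulmxA (mulmx1C UtU) mul1mx.
apply/matrixP => r c; rewrite (ord1 c) mxE summxE.
apply: eq_bigr => k _; rewrite !mxE dotE mulrC; congr (_ * _).
by apply: eq_bigr => s _; rewrite !mxE mulrC.
Qed.

Lemma parseval u y : orthonormal u -> dot y y = \sum_k dot y (u k) ^+ 2.
Proof.
by move=> uON; rewrite {1 2}(orthonormal_expansion y uON) dot_sums_orthonormal.
Qed.

Lemma orthonormal_neq0 u k : orthonormal u -> u k != 0.
Proof.
move=> uON; apply: contra_eqN (uON k k) => /eqP->.
by rewrite bform0l eqxx eq_sym oner_eq0.
Qed.

Lemma orthonormal_delta : orthonormal (fun k => col k (1%:M : 'M[R]_n)).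
Proof. by move=> k l; rewrite bform_delta mxE. Qed.

End Orthonormal.

Section GivensRotation.
Variables (R : realType) (n : nat).
Implicit Types (u : 'I_n -> 'cV[R]_n).

Definition rotate u (i j : 'I_n) (c s : R) k :=
  if k == i then c *: u i + s *: u j
  else if k == j then (- s) *: u i + c *: u j else u k.

Lemma rotate_i u i j c s : rotate u i j c s i = c *: u i + s *: u j.
Proof. by rewrite /rotate eqxx. Qed.

Lemma rotate_j u i j c s : i != j -> rotate u i j c s j = (- s) *: u i + c *: u j.
Proof. by move=> ij; rewrite /rotate eq_sym (negbTE ij) eqxx. Qed.

Lemma rotate_other u i j c s k : k != i -> k != j -> rotate u i j c s k = u k.
Proof. by move=> ki kj; rewrite /rotate (negbTE ki) (negbTE kj). Qed.

Lemma orthonormal_rotate u i j c s : i != j -> c ^+ 2 + s ^+ 2 = 1 ->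
  orthonormal u -> orthonormal (rotate u i j c s).
Proof.
move=> ij cs uON; have ji : (j == i) = false by rewrite eq_sym (negbTE ij).
have dot_plane a b a' b' :
    dot (a *: u i + b *: u j) (a' *: u i + b' *: u j) = a * a' + b * b'.
  by rewrite !(bformDl, bformDr, bformZl, bformZr) !uON !eqxx (negbTE ij) ji /=; ring.
have dot_plane_other a b m : m != i -> m != j -> dot (a *: u i + b *: u j) (u m) = 0.
  move=> mi mj; rewrite !(bformDl, bformZl) !uON ![_ == m]eq_sym.
  by rewrite (negbTE mi) (negbTE mj) !mulr0 addr0.
move=> k l.
have [-> | ki] := eqVneq k i; last have [-> | kj] := eqVneq k j.
all: have [-> | li] := eqVneq l i; last have [-> | lj] := eqVneq l j.
all: rewrite ?rotate_i ?rotate_j ?rotate_other //.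
all: rewrite ?[dot (u k) _]dotC ?dot_plane ?dot_plane_other //.
all: rewrite ?ji ?(negbTE ki) ?(negbTE kj) //=.
all: by rewrite -?cs; ring.
Qed.
End GivensRotation.

Lemma sum_eq0_pos_neg (R : realDomainType) (I : finType) (f : I -> R) k :
  \sum_i f i = 0 -> f k != 0 -> (exists i, 0 < f i) /\ (exists j, f j < 0).
Proof.
move=> f0 fk0; split; apply/existsP; apply: contraNT fk0 => /existsPn f_sign.
- have le0 i : 0 <= - f i by rewrite oppr_ge0 leNgt f_sign.
  have : \sum_i - f i = 0 by rewrite sumrN f0 oppr0.
  by move/(psumr_eq0P (fun i _ => le0 i)) => /(_ k isT) /eqP; rewrite oppr_eq0.
- have ge0 i : 0 <= f i by rewrite leNgt f_sign.
  by move: f0 => /(psumr_eq0P (fun i _ => ge0 i)) /(_ k isT) ->.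
Qed.

Section ZeroDiagonal.
Variables (R : realType) (n : nat) (Q : 'M[R]_n).
Hypothesis symQ : Q^T = Q.
Implicit Types (u : 'I_n -> 'cV[R]_n) (x z : 'cV[R]_n).

Local Notation q x := (bform Q x x).

Lemma sum_rotate u i j c s : i != j -> c ^+ 2 + s ^+ 2 = 1 ->
  \sum_k q (rotate u i j c s k) = \sum_k q (u k).
Proof.
move=> ij cs; rewrite (bigD1 i) // (bigD1 j) 1?eq_sym //= [RHS](bigD1 i) //.
rewrite [in RHS](bigD1 j) 1?eq_sym //= addrA [in RHS]addrA; congr (_ + _).
  rewrite rotate_i rotate_j // !bform_comb_diag //.
  by rewrite -[RHS]mul1r -cs; ring.
by apply: eq_bigr => k /andP[ki kj]; rewrite rotate_other.
Qed.

Lemma isotropic_rotation x z : 0 < q x -> q z < 0 ->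
  exists c s : R, c ^+ 2 + s ^+ 2 = 1 /\ q (c *: x + s *: z) = 0.
Proof.
set a := q x; set d := q z; set b := bform Q x z => a_gt0 d_lt0.
have d_neq0 : d != 0 by rewrite lt_eqF.
have disc_ge0 : 0 <= b ^+ 2 - a * d by have := sqr_ge0 b; nra.
(* [t = s / c] must solve [a + 2 t b + t^2 d = 0]; its discriminant is
   positive because [a d < 0]. *)
set t := (- b - Num.sqrt (b ^+ 2 - a * d)) / d.
have t_root : a + 2 * t * b + t ^+ 2 * d = 0.
  rewrite /t; set r := Num.sqrt _.
  transitivity ((a * d - b ^+ 2 + r ^+ 2) / d); first by field.
  by rewrite sqr_sqrtr // [_ + (_ - _)]addrC subrKA subrr mul0r.
set r := Num.sqrt (1 + t ^+ 2).
have r_gt0 : 0 < r by rewrite sqrtr_gt0; have := sqr_ge0 t; lra.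
have r2 : r ^+ 2 = 1 + t ^+ 2 by rewrite sqr_sqrtr // addr_ge0 ?sqr_ge0.
exists r^-1, (t / r); split.
  transitivity ((1 + t ^+ 2) / r ^+ 2); first by field; rewrite gt_eqF.
  by rewrite -r2 divff // expf_neq0 // gt_eqF.
rewrite bform_comb_diag // -/a -/b -/d.
transitivity (r^-1 ^+ 2 * (a + 2 * t * b + t ^+ 2 * d)); first by field; rewrite gt_eqF.
by rewrite t_root mulr0.
Qed.

Definition diag_support u := [set k | q (u k) != 0].

Lemma zero_diag_step u : orthonormal u -> \sum_k q (u k) = 0 ->
  diag_support u != set0 ->
  exists u', [/\ orthonormal u', \sum_k q (u' k) = 0 &
                 (#|diag_support u'| < #|diag_support u|)%N].
Proof.
move=> uON sum0 /set0Pn[k0]; rewrite inE => qk0.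
have [[i qi_gt0] [j qj_lt0]] := sum_eq0_pos_neg sum0 qk0.
have ij : i != j by apply: contraTneq qi_gt0 => ->; rewrite -leNgt ltW.
have [c [s [cs q0]]] := isotropic_rotation qi_gt0 qj_lt0.
exists (rotate u i j c s); split; [exact: orthonormal_rotate | by rewrite sum_rotate |].
rewrite (cardsD1 i (diag_support u)) inE (gt_eqF qi_gt0) add1n ltnS.
apply: subset_leq_card; apply/subsetP => k; rewrite !inE.
have [->|ki] := eqVneq k i; first by rewrite rotate_i q0 eqxx.
have [->|kj] := eqVneq k j; first by rewrite (lt_eqF qj_lt0).
by rewrite rotate_other.
Qed.

Theorem trace0_orthonormal_zero_diag : \tr Q = 0 ->
  exists u, orthonormal u /\ forall k, q (u k) = 0.
Proof.
move=> trQ0; pose e k := col k (1%:M : 'M[R]_n).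
have sum_e : \sum_k q (e k) = 0.
  by rewrite -[RHS]trQ0 /mxtrace; apply: eq_bigr => k _; rewrite bform_delta.
have e_ON : orthonormal e := @orthonormal_delta R n.
have [m] := ubnP #|diag_support e|.
elim: m e e_ON sum_e => // m IHm u uON sum0; rewrite ltnS => supp_le.
have [supp0 | /(zero_diag_step uON sum0)[u' [u'ON sum0' supp_lt]]] :=
  eqVneq (diag_support u) set0.
  exists u; split => // k; apply/eqP/negbFE.
  by move/setP/(_ k): supp0; rewrite !inE.
exact: IHm u' u'ON sum0' (leq_trans supp_lt supp_le).
Qed.

End ZeroDiagonal.

Section SquareRoot.
Variables (R : realType) (n : nat).
Implicit Types (A B M : 'M[R]_n) (z : 'cV[R]_n).

Lemma pos_def_unitmx M : pos_def M -> M \in unitmx.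
Proof.
case=> _ posM; rewrite -row_free_unit; apply: inj_row_free => w wM0.
apply/eqP; apply: contraT => w_neq0.
have := posM w^T; rewrite trmx_eq0 => /(_ w_neq0).
by rewrite /qform trmxK wM0 mul0mx mxE ltxx.
Qed.

Lemma qform_invmx_sqrt A B z : B^T = B -> B \in unitmx -> B *m B = A ->
  qform (invmx A) (B *m z) = dot z z.
Proof.
move=> symB B_unit BBA.
have BtAiB : B^T *m invmx A *m B = 1%:M.
  have A_unit : A \in unitmx by rewrite -BBA unitmx_mul B_unit.
  have AiB : invmx A *m B = invmx B.
    by rewrite -[LHS](mulmxK B_unit) -(mulmxA _ B B) BBA mulVmx // mul1mx.
  by rewrite symB -mulmxA AiB mulmxV.
rewrite /qform /bform mulmx1 trmx_mul -!mulmxA (mulmxA B^T).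
by rewrite (mulmxA (B^T *m _)) BtAiB mul1mx.
Qed.

Lemma enorm_mulmx A B z : B^T *m B = A -> enorm (B *m z) = Num.sqrt (bform A z z).
Proof. by move=> BtBA; rewrite /enorm /bform trmx_mul -BtBA !mulmxA. Qed.

Lemma enormZ a z : enorm (a *: z) = `|a| * enorm z.
Proof.
rewrite /enorm !linearZ /= -scalemxAl !mxE mulrA -expr2.
by rewrite sqrtrM ?sqr_ge0 // sqrtr_sqr.
Qed.

End SquareRoot.

Section OrthonormalFrame.
Variables (R : realType) (n : nat) (B : 'M[R]_n) (u : 'I_n -> 'cV[R]_n) (w : 'I_n -> R).
Hypothesis uON : orthonormal u.

Definition frame_edges k := (2 * w k) *: (B *m u k).

Lemma pvertex_frame_edges e :
  pvertex frame_edges e = B *m \sum_k ((-1) ^+ e k * w k) *: u k.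
Proof.
rewrite /pvertex mulmx_sumr scaler_sumr; apply: eq_bigr => k _.
by rewrite /frame_edges -scalemxAr !scalerA; congr (_ *: _); field.
Qed.

Lemma lin_indep_frame_edges : B \in unitmx -> (forall k, w k != 0) ->
  lin_indep frame_edges.
Proof.
move=> B_unit w_neq0 c sum0 l.
have coord0 : \sum_k (c k * (2 * w k)) *: u k = 0.
  apply: (can_inj (mulKmx B_unit)); rewrite mulmx0 -[RHS]sum0 mulmx_sumr.
  by apply: eq_bigr => k _; rewrite -scalemxAr scalerA.
have := dot_sum_orthonormal (fun k => c k * (2 * w k)) l uON.
rewrite coord0 bform0l => /esym/eqP; rewrite !mulf_eq0 (negbTE (w_neq0 l)) pnatr_eq0 /=.
by rewrite orbF => /eqP.
Qed.

Lemma inscribed_frame_edges A :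
  (forall z, qform (invmx A) (B *m z) = dot z z) -> \sum_k w k ^+ 2 = 1 ->
  inscribed A frame_edges.
Proof.
move=> qform_B w_sum e; rewrite pvertex_frame_edges qform_B dot_sums_orthonormal //.
rewrite -[RHS]w_sum; apply: eq_bigr => k _.
by rewrite mulrACA -expr2 sqrr_sign mul1r.
Qed.

Lemma is_vertex_frame_edges : is_vertex frame_edges (B *m \sum_k w k *: u k).
Proof.
exists (fun _ => false); rewrite pvertex_frame_edges.
by under eq_bigr do rewrite expr0 mul1r.
Qed.

Lemma edge_length_frame_edges A T : (0 < n)%N -> B^T *m B = A ->
  (forall k, bform A (u k) (u k) = T * w k ^+ 2) -> \sum_k w k ^+ 2 = 1 ->
  edge_length frame_edges = 2 ^+ n * Num.sqrt T.
Proof.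
move=> n_gt0 BtBA Auu w_sum.
have edgeE k : enorm (frame_edges k) = 2 * Num.sqrt T * w k ^+ 2.
  rewrite enormZ (enorm_mulmx _ BtBA) Auu [T * _]mulrC sqrtrM ?sqr_ge0 // sqrtr_sqr.
  rewrite mulrA -normrM ger0_norm; first by ring.
  by rewrite -mulrA mulr_ge0 // -expr2 sqr_ge0.
rewrite /edge_length (eq_bigr _ (fun k _ => edgeE k)) -mulr_sumr w_sum mulr1.
by rewrite -[in RHS](prednK n_gt0) exprS; ring.
Qed.

End OrthonormalFrame.

Theorem corollary3p4 (R : realType) (n : nat) (A B : 'M[R]_n) (x0 : 'cV[R]_n) :
  (2 <= n)%N ->
  pos_def A ->
  pos_def B -> B *m B = A ->
  qform (invmx A) x0 = 1 ->
  [\/ n = 2%N,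
      (exists c : R, A = c%:M) |
      (3 <= n)%N /\ invmx B *m x0 != 0 /\
        (exists lam : R, A *m (invmx B *m x0) = lam *: (invmx B *m x0))] ->
  exists v : 'I_n -> 'cV[R]_n,
    [/\ lin_indep v, inscribed A v, is_vertex v x0 &
        edge_length v = 2 ^+ n * Num.sqrt (\tr A)].
Proof.
move=> n_ge2 [symA posA] B_pd BBA x0_on_E _.
have symB : B^T = B := B_pd.1.
have B_unit : B \in unitmx := pos_def_unitmx B_pd.
have qform_B z : qform (invmx A) (B *m z) = dot z z := qform_invmx_sqrt z symB B_unit BBA.
set y := invmx B *m x0.
have x0E : x0 = B *m y by rewrite /y mulmxA mulmxV // mul1mx.
have y_unit : dot y y = 1 by rewrite -qform_B -x0E.
pose Q := \tr A *: (y *m y^T) - A.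
have symQ : Q^T = Q by rewrite /Q linearB linearZ /= trmx_mul trmxK symA.
have trQ : \tr Q = 0 by rewrite /Q linearB linearZ /= mxtrace_rank1 y_unit mulr1 subrr.
have [u [uON uQ0]] := trace0_orthonormal_zero_diag symQ trQ.
pose w k := dot y (u k).
have Auu k : bform A (u k) (u k) = \tr A * w k ^+ 2.
  by apply/eqP; rewrite eq_sym -subr_eq0 -(uQ0 k) bform_mxB bform_mxZ bform_rank1.
have w_sum : \sum_k w k ^+ 2 = 1 by rewrite -y_unit (parseval y uON).
have w_neq0 k : w k != 0.
  have : 0 < bform A (u k) (u k) := posA _ (orthonormal_neq0 k uON).
  by rewrite Auu; apply: contraTneq => ->; rewrite expr0n mulr0 ltxx.
exists (frame_edges B u w); split.
- exact: lin_indep_frame_edges.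
- exact: inscribed_frame_edges.
- rewrite x0E [y in B *m y](orthonormal_expansion y uON).
  exact: is_vertex_frame_edges.
- by apply: (edge_length_frame_edges (A := A)); rewrite ?symB // ltnW.
Qed.
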